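(* Let $\oplus$ be a combinator whose domain is contained in $V(W)$. Then $\oplus$ is a TeamQueue combinator if and only if $\oplus$ is basic and satisfies, for every pair $\langle\preceq_1,\preceq_2\rangle$ in its domain and all $x,y,z \in W$: ($\oplus$SPU+) if $x \prec_1 y$ and $z \prec_2 y$ then $x \prec_{1\oplus 2} y$ or $z \prec_{1\oplus 2} y$; ($\oplus$WPU+) if $x \preceq_1 y$ and $z \preceq_2 y$ then $x \preceq_{1\oplus 2} y$ or $z \preceq_{1\oplus 2} y$.
   Context: $W$ is a finite nonempty set (of possible worlds). A tpo is a total preorder on $W$; $\prec$ is its strict part. For $S \subseteq W$, $\min(\preceq, S) = \{x \in S : x \preceq y \text{ for all } y \in S\}$. Two tpos $\preceq_1, \preceq_2$ are $S$-variants ($S \subseteq W$) if $x \preceq_1 y \iff x \preceq_2 y$ for all $(x,y) \in (S\times S) \cup (S^c \times S^c)$; $V(W)$ is the set of pairs $\langle\preceq_1,\preceq_2\rangle$ of tpos that are $S$-variants for some $S \subseteq W$. A combinator $\oplus$ maps pairs of tpos in its domain to a tpo $\preceq_{1\oplus 2}$. It is basic if $\min(\preceq_{1\oplus 2}, W) = \min(\preceq_1, W) \cup \min(\preceq_2, W)$ for every pair in its domain. $\oplus$ is a TeamQueue combinator if for each pair $\langle\preceq_1,\preceq_2\rangle$ in its domain there is a sequence $\langle a(i)\rangle_{i \in \mathbb{N}}$ with $\emptyset \neq a(i) \subseteq \{1,2\}$ and $a(1) = \{1,2\}$, such that $\preceq_{1\oplus 2}$ is the tpo with ordered partition into ranks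 (most plausible first) $\langle T_1, \ldots, T_m\rangle$, where $T_i = \bigcup_{j \in a(i)} \min(\preceq_j, \bigcap_{k<i} T_k^c)$ and $m$ is minimal with $\bigcup_{i \le m} T_i = W$. *)

From mathcomp Require Import all_boot all_order.
Set Implicit Arguments. Unset Strict Implicit. Unset Printing Implicit Defensive.

Section TeamQueueDefs.
Variable W : finType.

Definition tpo (R : rel W) : Prop :=
  (forall x y, R x y || R y x) /\ (forall x y z, R x y -> R y z -> R x z).

Definition strict (R : rel W) (x y : W) : bool := R x y && ~~ R y x.

Definition minr (R : rel W) (S : {set W}) : {set W} :=
  [set x in S | [forall y in S, R x y]].

Definition Svariants (S : {set W}) (R1 R2 : rel W) : Prop :=
  forall x y, ((x \in S) && (y \in S)) || ((x \notin S) && (y \notin S)) ->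
    (R1 x y <-> R2 x y).

Definition inV (R1 R2 : rel W) : Prop :=
  tpo R1 /\ tpo R2 /\ exists S : {set W}, Svariants S R1 R2.

(* agent index: ord0 = agent 1, ord1 = agent 2 *)
Definition agent (R1 R2 : rel W) (j : 'I_2) : rel W :=
  if j == ord0 then R1 else R2.

Definition tq_step (R1 R2 : rel W) (A : {set 'I_2}) (r : {set W}) : {set W} :=
  \bigcup_(j in A) minr (agent R1 R2 j) r.

(* remaining worlds after cells T_1..T_k: rem k = ∩_{i<=k} T_i^c *)
Fixpoint tq_rem (R1 R2 : rel W) (a : nat -> {set 'I_2}) (k : nat) : {set W} :=
  match k with
  | 0 => setT
  | k'.+1 => tq_rem R1 R2 a k' :\: tq_step R1 R2 (a k) (tq_rem R1 R2 a k')
  end.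

(* the cell T_i (i >= 1) *)
Definition tq_cell (R1 R2 : rel W) (a : nat -> {set 'I_2}) (i : nat) : {set W} :=
  tq_step R1 R2 (a i) (tq_rem R1 R2 a i.-1).

Definition tq_upto (R1 R2 : rel W) (a : nat -> {set 'I_2}) (m : nat) : {set W} :=
  \bigcup_(1 <= i < m.+1) tq_cell R1 R2 a i.

(* R is the TeamQueue result of (R1,R2) for the sequence a:
   R is the tpo with ordered partition <T_1,...,T_m>, m minimal with
   T_1 ∪ ... ∪ T_m = W. *)
Definition tq_result (R1 R2 : rel W) (a : nat -> {set 'I_2}) (R : rel W) : Prop :=
  exists m : nat,
    tq_upto R1 R2 a m = setT /\
    (forall m', m' < m -> tq_upto R1 R2 a m' != setT) /\
    (forall x y, R x y <->
       exists i j, [/\ 1 <= i, i <= j, j <= m,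
                       x \in tq_cell R1 R2 a i & y \in tq_cell R1 R2 a j]).

Definition combinator (D : rel W -> rel W -> Prop)
  (comb : rel W -> rel W -> rel W) : Prop :=
  forall R1 R2, D R1 R2 -> tpo R1 -> tpo R2 -> tpo (comb R1 R2).

Definition TeamQueue (D : rel W -> rel W -> Prop)
  (comb : rel W -> rel W -> rel W) : Prop :=
  forall R1 R2, D R1 R2 ->
    exists a : nat -> {set 'I_2},
      a 1 = setT /\ (forall i, 0 < i -> a i != set0) /\
      tq_result R1 R2 a (comb R1 R2).

Definition basic (D : rel W -> rel W -> Prop)
  (comb : rel W -> rel W -> rel W) : Prop :=
  forall R1 R2, D R1 R2 ->
    minr (comb R1 R2) setT = minr R1 setT :|: minr R2 setT.

Definition SPUplus (D : rel W -> rel W -> Prop)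
  (comb : rel W -> rel W -> rel W) : Prop :=
  forall R1 R2, D R1 R2 -> forall x y z,
    strict R1 x y -> strict R2 z y ->
    strict (comb R1 R2) x y || strict (comb R1 R2) z y.

Definition WPUplus (D : rel W -> rel W -> Prop)
  (comb : rel W -> rel W -> rel W) : Prop :=
  forall R1 R2, D R1 R2 -> forall x y z,
    R1 x y -> R2 z y ->
    comb R1 R2 x y || comb R1 R2 z y.

End TeamQueueDefs.

From mathcomp Require Import all_boot all_order.
Set Implicit Arguments. Unset Strict Implicit. Unset Printing Implicit Defensive.

(* A TeamQueue result ranks each world by the index of its cell.  A world y of
   cell T_j is minimal in the remainder for some agent of a(j): whatever that
   agent ranks at most y and is still in the remainder joins T_j, and whatever
   it ranks strictly below y has already left; this gives SPU+ and WPU+, and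
   T_1 is the union of the agents' minima.  Conversely, peel the result
   ordering into its own layers and let a(i) collect the agents whose minimal
   remaining worlds are all minimal for the result.  SPU+ makes every minimal
   world minimal for some agent and WPU+ makes a(i) nonempty; S-variance shows
   that a minimal world that is minimal for an agent outside a(i) is minimal
   for the other agent too, so the TeamQueue step over a(i) is exactly the
   next layer, and basicness gives a(1) = {1,2}. *)

Section Minimal.
Variable W : finType.
Implicit Types (R : rel W) (S : {set W}).

Lemma minrP R S x :
  reflect (x \in S /\ forall y, y \in S -> R x y) (x \in minr R S).
Proof. by rewrite /minr inE; apply: (iffP andP) => -[xS /forall_inP]. Qed.

Lemma minr_sub R S : minr R S \subset S.
Proof. by apply/subsetP => x /minrP[]. Qed.

Lemma minr_nonempty R S x0 : tpo R -> x0 \in S -> exists x, x \in minr R S.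
Proof.
move=> [tot tr] x0S.
case: (arg_minnP (fun x => #|[set y | R y x]|) x0S) => x xS xmin.
exists x; apply/minrP; split=> // y yS; apply: contraT => nRxy.
have Ryx : R y x by move: (tot x y); rewrite (negbTE nRxy).
have : [set z | R z y] \proper [set z | R z x].
  apply/properP; split.
    by apply/subsetP => z; rewrite !inE => Rzy; apply: tr Rzy Ryx.
  by exists x; rewrite !inE ?orbb ?(negbTE nRxy) //; move: (tot x x); rewrite orbb.
by move/proper_card; rewrite ltnNge xmin.
Qed.

Lemma minr_le R S x y :
  tpo R -> y \in minr R S -> x \in S -> R x y -> x \in minr R S.
Proof.
move=> [_ tr] /minrP[_ ymin] xS Rxy; apply/minrP; split=> // z zS.
exact: tr Rxy (ymin z zS).
Qed.

Lemma notin_minr R S y :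
  y \in S -> y \notin minr R S -> exists2 x, x \in S & ~~ R y x.
Proof. by move=> yS; rewrite /minr inE yS => /forall_inPn[x xS nRyx]; exists x. Qed.

Lemma tpo_strictN R x y : tpo R -> ~~ R y x -> strict R x y.
Proof.
move=> [tot _] nRyx; rewrite /strict nRyx andbT.
by move: (tot x y); rewrite (negbTE nRyx) orbF.
Qed.

End Minimal.

Section TwoAgents.
Variables (W : finType) (R1 R2 : rel W).
Implicit Types (A : {set 'I_2}) (r : {set W}).

Lemma tq_stepP A r y :
  reflect ((ord0 \in A /\ y \in minr R1 r) \/ (ord_max \in A /\ y \in minr R2 r))
          (y \in tq_step R1 R2 A r).
Proof.
apply: (iffP bigcupP) => [[[[|[|//]] lt_j2] jA yj]|[[jA yj]|[jA yj]]].
- by left; rewrite (_ : Ordinal lt_j2 = ord0) in jA yj; last exact: val_inj.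
- by right; rewrite (_ : Ordinal lt_j2 = ord_max) in jA yj; last exact: val_inj.
- by exists ord0.
- by exists ord_max.
Qed.

Lemma tq_step_setT r : tq_step R1 R2 setT r = minr R1 r :|: minr R2 r.
Proof.
apply/setP => y; rewrite inE; apply/tq_stepP/orP.
  by case=> [[_ y1]|[_ y2]]; [left|right].
by case=> [y1|y2]; [left|right]; rewrite in_setT.
Qed.

End TwoAgents.

Section TeamQueueLayers.
Variables (W : finType) (R1 R2 : rel W) (a : nat -> {set 'I_2}).
Local Notation rem := (tq_rem R1 R2 a).
Local Notation cell := (tq_cell R1 R2 a).

Lemma tq_cell_sub i : cell i \subset rem i.-1.
Proof. by apply/subsetP => x /tq_stepP[[_ /minrP[]]|[_ /minrP[]]]. Qed.

Lemma tq_rem_mono n k : n <= k -> rem k \subset rem n.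
Proof.
move/subnK <-; elim: (k - n) => [|d IH] //=.
exact: subset_trans (subsetDl _ _) IH.
Qed.

Lemma mem_tq_rem i k x : 0 < i -> x \in cell i -> (x \in rem k) = (k < i).
Proof.
move=> i_gt0 xi; case: ltnP => [lt_ki|le_ik].
  apply: (subsetP (tq_rem_mono _)) (subsetP (tq_cell_sub i) x xi).
  by rewrite -ltnS prednK.
apply/negbTE; apply: contraL xi => /(subsetP (tq_rem_mono le_ik)).
by rewrite -{1}(prednK i_gt0) /= inE prednK // => /andP[].
Qed.

Lemma tq_cell_uniq i j x :
  0 < i -> 0 < j -> x \in cell i -> x \in cell j -> i = j.
Proof.
move=> i_gt0 j_gt0 xi xj; apply/eqP; rewrite eqn_leq.
have le_ji : j <= i.
  rewrite -(prednK j_gt0) -(mem_tq_rem _ i_gt0 xi).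
  by rewrite (mem_tq_rem _ j_gt0 xj) prednK.
have le_ij : i <= j.
  rewrite -(prednK i_gt0) -(mem_tq_rem _ j_gt0 xj).
  by rewrite (mem_tq_rem _ i_gt0 xi) prednK.
by rewrite le_ij le_ji.
Qed.

Lemma notin_tq_rem k x :
  x \notin rem k -> exists i, [/\ 0 < i, i <= k & x \in cell i].
Proof.
elim: k => [|k IH] /=; first by rewrite inE.
rewrite inE negb_and negbK => /orP[xk|/IH[i [i_gt0 le_ik xi]]].
  by exists k.+1.
by exists i; rewrite i_gt0 (leqW le_ik).
Qed.

Lemma tq_upto_rem m : tq_upto R1 R2 a m = ~: rem m.
Proof.
elim: m => [|m IH]; first by rewrite /tq_upto big_geq // setCT.
by rewrite /tq_upto big_nat_recr //= -/(tq_upto _ _ _ _) IH setCD.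
Qed.

Lemma tq_cell_le m j x : rem m = set0 -> x \in cell j -> j <= m.
Proof.
move=> rem_m xj; rewrite leqNgt; apply/negP => lt_mj.
have j_gt0 : 0 < j by apply: leq_ltn_trans lt_mj.
have le_mj : m <= j.-1 by rewrite -ltnS prednK.
have : x \in rem j.-1 by rewrite (mem_tq_rem _ j_gt0 xj) prednK.
by move/(subsetP (tq_rem_mono le_mj)); rewrite rem_m inE.
Qed.

Lemma tq_result_intro m C :
  rem m = set0 -> (forall m', m' < m -> rem m' != set0) ->
  (forall x y i j, 0 < i -> 0 < j -> x \in cell i -> y \in cell j ->
     C x y = (i <= j)) ->
  tq_result R1 R2 a C.
Proof.
move=> rem_m min_m Cle; exists m; split; [|split].
- by rewrite tq_upto_rem rem_m setC0.
- by move=> m' lt_m'm; rewrite tq_upto_rem -setC0 (inj_eq (@setC_inj _)) min_m.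
have rank u : exists i, [/\ 0 < i, i <= m & u \in cell i].
  by apply: notin_tq_rem; rewrite rem_m inE.
move=> x y; split=> [Cxy|[i [j [i_gt0 le_ij _ xi yj]]]].
  have [i [i_gt0 _ xi]] := rank x; have [j [j_gt0 le_jm yj]] := rank y.
  by exists i, j; rewrite -(Cle x y i j).
by rewrite (Cle x y i j) // (leq_trans i_gt0).
Qed.

End TeamQueueLayers.

Section TeamQueueResult.
Variables (W : finType) (R1 R2 C : rel W) (a : nat -> {set 'I_2}) (m : nat).
Hypotheses (tR1 : tpo R1) (tR2 : tpo R2).
Hypothesis upto_m : tq_upto R1 R2 a m = setT.
Hypothesis Cdef : forall x y, C x y <->
  exists i j, [/\ 1 <= i, i <= j, j <= m,
                  x \in tq_cell R1 R2 a i & y \in tq_cell R1 R2 a j].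
Local Notation rem := (tq_rem R1 R2 a).
Local Notation cell := (tq_cell R1 R2 a).

Lemma tq_rem_result : rem m = set0.
Proof. by apply: setC_inj; rewrite -tq_upto_rem upto_m setC0. Qed.

Lemma tq_rank x : exists2 i, 0 < i & x \in cell i.
Proof.
have [|i [i_gt0 _ xi]] := @notin_tq_rem _ R1 R2 a m x; last by exists i.
by rewrite tq_rem_result inE.
Qed.

Lemma tq_result_le x y i j :
  0 < i -> 0 < j -> x \in cell i -> y \in cell j -> C x y = (i <= j).
Proof.
move=> i_gt0 j_gt0 xi yj.
apply/idP/idP => [/Cdef[i' [j' [i'_gt0 le_ij' _ xi' yj']]]|le_ij].
  rewrite (tq_cell_uniq i_gt0 i'_gt0 xi xi').
  by rewrite (tq_cell_uniq j_gt0 (leq_trans i'_gt0 le_ij') yj yj').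
by apply/Cdef; exists i, j; rewrite i_gt0 le_ij (tq_cell_le tq_rem_result yj).
Qed.

Lemma tq_result_WPU x y z : R1 x y -> R2 z y -> C x y || C z y.
Proof.
move=> R1xy R2zy.
have [j j_gt0 yj] := tq_rank y; have [i i_gt0 xi] := tq_rank x.
have [k k_gt0 zk] := tq_rank z.
rewrite (tq_result_le i_gt0 j_gt0 xi yj) (tq_result_le k_gt0 j_gt0 zk yj).
apply/negPn/negP; rewrite negb_or -!ltnNge => /andP[lt_ji lt_jk].
have xr : x \in rem j.-1 by rewrite (mem_tq_rem _ i_gt0 xi) prednK // ltnW.
have zr : z \in rem j.-1 by rewrite (mem_tq_rem _ k_gt0 zk) prednK // ltnW.
case/tq_stepP: (yj) => [[aj ymin]|[aj ymin]].
  have /(tq_cell_uniq i_gt0 j_gt0 xi) eq_ij : x \in cell j.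
    by apply/tq_stepP; left; split=> //; apply: minr_le ymin xr R1xy.
  by rewrite eq_ij ltnn in lt_ji.
have /(tq_cell_uniq k_gt0 j_gt0 zk) eq_kj : z \in cell j.
  by apply/tq_stepP; right; split=> //; apply: minr_le ymin zr R2zy.
by rewrite eq_kj ltnn in lt_jk.
Qed.

Lemma tq_result_SPU x y z :
  strict R1 x y -> strict R2 z y -> strict C x y || strict C z y.
Proof.
move=> /andP[_ nR1yx] /andP[_ nR2yz].
have [j j_gt0 yj] := tq_rank y; have [i i_gt0 xi] := tq_rank x.
have [k k_gt0 zk] := tq_rank z.
rewrite /strict (tq_result_le i_gt0 j_gt0 xi yj) (tq_result_le j_gt0 i_gt0 yj xi).
rewrite (tq_result_le k_gt0 j_gt0 zk yj) (tq_result_le j_gt0 k_gt0 yj zk) -!ltnNge.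
case/tq_stepP: (yj) => [[_ /minrP[_ ymin]]|[_ /minrP[_ ymin]]].
  suff lt_ij : i < j by rewrite lt_ij (ltnW lt_ij).
  rewrite ltnNge; apply: contra nR1yx => le_ji; apply: ymin.
  by rewrite (mem_tq_rem _ i_gt0 xi) prednK.
suff lt_kj : k < j by rewrite lt_kj (ltnW lt_kj) orbT.
rewrite ltnNge; apply: contra nR2yz => le_jk; apply: ymin.
by rewrite (mem_tq_rem _ k_gt0 zk) prednK.
Qed.

Lemma tq_result_basic :
  a 1 = setT -> minr C setT = minr R1 setT :|: minr R2 setT.
Proof.
move=> a1; have cell1 : cell 1 = minr R1 setT :|: minr R2 setT.
  by rewrite /tq_cell a1 tq_step_setT.
rewrite -cell1; apply/setP => x; apply/idP/idP => [/minrP[_ xmin]|x1].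
  have [y y1] := minr_nonempty tR1 (in_setT x).
  have y_cell1 : y \in cell 1 by rewrite cell1 inE y1.
  have [i i_gt0 xi] := tq_rank x.
  have := xmin y (in_setT y); rewrite (tq_result_le i_gt0 _ xi y_cell1) // => le_i1.
  by have <- : i = 1 by apply/eqP; rewrite eqn_leq le_i1.
apply/minrP; split=> // y _; have [j j_gt0 yj] := tq_rank y.
by rewrite (tq_result_le _ j_gt0 x1 yj).
Qed.

End TeamQueueResult.

Lemma Svariants_same (W : finType) (S : {set W}) (Ra Rb : rel W) x y :
  Svariants S Ra Rb -> (x \in S) = (y \in S) -> Ra x y -> Rb x y.
Proof. by move=> sv xy; apply: (sv x y _).1; rewrite xy; case: (y \in S). Qed.

(* WPU+ with z := x gives ~~ Rb x y, so x and y lie on different sides of S;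
   any other world shares a side with one of them, where Ra and Rb agree. *)
Lemma minr_variant_other (W : finType) (Ra Rb C : rel W) (S r : {set W}) x y :
  tpo Rb -> tpo C -> Svariants S Ra Rb ->
  (forall x y z, Ra x y -> Rb z y -> C x y || C z y) ->
  y \in minr C r -> y \in minr Ra r -> x \in minr Ra r -> x \notin minr C r ->
  y \in minr Rb r.
Proof.
move=> [totB trB] tC sv WPU yC /minrP[yr ymin] /minrP[xr xmin] xC.
have nCxy : ~~ C x y by apply: contra xC; apply: minr_le tC yC xr.
have nRbxy : ~~ Rb x y.
  by apply: contra nCxy => /(WPU _ _ _ (xmin y yr)); rewrite orbb.
apply/minrP; split=> // z zr; apply: contraNT nRbxy => nRbyz.
have Rbzy : Rb z y by move: (totB y z); rewrite (negbTE nRbyz).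
case: ((x \in S) =P (y \in S)) => [xy|nxy].
  exact: Svariants_same sv xy (xmin y yr).
case: ((y \in S) =P (z \in S)) => [yz|nyz].
  by rewrite (Svariants_same sv yz (ymin z zr)) in nRbyz.
have xz : (x \in S) = (z \in S).
  by move: nxy nyz; case: (x \in S); case: (y \in S); case: (z \in S).
exact: trB (Svariants_same sv xz (xmin z zr)) Rbzy.
Qed.

Section Peel.
Variables (W : finType) (R : rel W).
Hypothesis tR : tpo R.

Fixpoint peel k : {set W} :=
  if k is k'.+1 then peel k' :\: minr R (peel k') else setT.

Lemma card_peel k : #|peel k| <= #|W| - k.
Proof.
elim: k => [|k IH] /=; first by rewrite cardsT subn0.
have [->|[x xk]] := set_0Vmem (peel k); first by rewrite set0D cards0.
have [y ymin] := minr_nonempty tR xk.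
have : #|peel k :\: minr R (peel k)| < #|peel k|.
  apply: proper_card; apply/properP; split; first exact: subsetDl.
  by exists y; [exact: subsetP (minr_sub _ _) y ymin | rewrite inE ymin].
by move/leq_trans/(_ IH); rewrite subnS; case: (#|W| - k).
Qed.

Lemma peel_card_eq0 : peel #|W| = set0.
Proof. by apply/eqP; rewrite -cards_eq0 -leqn0 -(subnn #|W|) card_peel. Qed.

Lemma peel_mono n k : n <= k -> peel k \subset peel n.
Proof.
move/subnK <-; elim: (k - n) => [|d IH] //=.
exact: subset_trans (subsetDl _ _) IH.
Qed.

Lemma minr_peel_le i j x y :
  x \in minr R (peel i) -> y \in minr R (peel j) -> R x y = (i <= j).
Proof.
move=> xi yj; apply/idP/idP => [Rxy|le_ij].
  rewrite leqNgt; apply/negP => lt_ji.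
  have /setDP[xr x_notj] : x \in peel j.+1.
    exact: (subsetP (peel_mono lt_ji)) (subsetP (minr_sub _ _) x xi).
  have [w wr nRxw] := notin_minr xr x_notj.
  have [_ ymin] := minrP _ _ _ yj.
  by rewrite (tR.2 _ _ _ Rxy (ymin w wr)) in nRxw.
have [_ xmin] := minrP _ _ _ xi; apply: xmin.
exact: (subsetP (peel_mono le_ij)) (subsetP (minr_sub _ _) y yj).
Qed.

End Peel.

Section PostulatesToTeamQueue.
Variables (W : finType) (R1 R2 C : rel W) (S : {set W}).
Hypotheses (tR1 : tpo R1) (tR2 : tpo R2) (tC : tpo C) (sv : Svariants S R1 R2).
Hypothesis SPU : forall x y z,
  strict R1 x y -> strict R2 z y -> strict C x y || strict C z y.
Hypothesis WPU : forall x y z, R1 x y -> R2 z y -> C x y || C z y.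

Lemma minr_sub_agents r : minr C r \subset minr R1 r :|: minr R2 r.
Proof.
apply/subsetP => y yC; have [yr ymin] := minrP _ _ _ yC; rewrite inE.
apply: contraT => /norP[/(notin_minr yr)[x xr nR1yx] /(notin_minr yr)[z zr nR2yz]].
have := SPU (tpo_strictN tR1 nR1yx) (tpo_strictN tR2 nR2yz).
by rewrite /strict (ymin x xr) (ymin z zr) !andbF.
Qed.

Lemma minr_agent_sub r y :
  y \in minr C r -> (minr R1 r \subset minr C r) || (minr R2 r \subset minr C r).
Proof.
move=> yC; have [yr _] := minrP _ _ _ yC.
apply: contraT; rewrite negb_or => /andP[/subsetPn[x x1 xC] /subsetPn[z z2 zC]].
have [xr xmin] := minrP _ _ _ x1; have [zr zmin] := minrP _ _ _ z2.
case/orP: (WPU (xmin y yr) (zmin y yr)) => [Cxy|Czy].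
  by rewrite (minr_le tC yC xr Cxy) in xC.
by rewrite (minr_le tC yC zr Czy) in zC.
Qed.

Definition tq_agents r : {set 'I_2} :=
  [set j | minr (agent R1 R2 j) r \subset minr C r].

Lemma tq_agents0 r : (ord0 \in tq_agents r) = (minr R1 r \subset minr C r).
Proof. by rewrite inE. Qed.

Lemma tq_agents1 r : (ord_max \in tq_agents r) = (minr R2 r \subset minr C r).
Proof. by rewrite inE. Qed.

Lemma tq_step_agents r : tq_step R1 R2 (tq_agents r) r = minr C r.
Proof.
apply/setP => y; apply/tq_stepP/idP => [[[j1 y1]|[j2 y2]]|yC].
- by move: j1; rewrite tq_agents0 => /subsetP; apply.
- by move: j2; rewrite tq_agents1 => /subsetP; apply.
rewrite tq_agents0 tq_agents1; have sub12 := minr_agent_sub yC.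
case/setUP: (subsetP (minr_sub_agents r) y yC) => [y1|y2].
  have [sub1|nsub1] := boolP (minr R1 r \subset minr C r); first by left.
  have /subsetPn[x x1 xC] := nsub1.
  right; split; first by move: sub12; rewrite (negbTE nsub1).
  exact: minr_variant_other tR2 tC sv WPU yC y1 x1 xC.
have [sub2|nsub2] := boolP (minr R2 r \subset minr C r); first by right.
have /subsetPn[x x2 xC] := nsub2.
left; split; first by move: sub12; rewrite (negbTE nsub2) orbF.
have sv' : Svariants S R2 R1 by move=> u v uv; apply: iff_sym; apply: sv.
have WPU' u v w : R2 u v -> R1 w v -> C u v || C w v.
  by rewrite orbC => R2uv R1wv; apply: WPU.
exact: minr_variant_other tR1 tC sv' WPU' yC y2 x2 xC.
Qed.

Lemma tq_agents_neq0 r : tq_agents r != set0.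
Proof.
apply/set0Pn; have [->|[x xr]] := set_0Vmem r.
  exists ord0; rewrite tq_agents0; apply/subsetP => u /(subsetP (minr_sub _ _)).
  by rewrite inE.
have [y yC] := minr_nonempty tC xr.
case/orP: (minr_agent_sub yC) => sub.
  by exists ord0; rewrite tq_agents0.
by exists ord_max; rewrite tq_agents1.
Qed.

Lemma tq_agents_setT :
  minr C setT = minr R1 setT :|: minr R2 setT -> tq_agents setT = setT.
Proof.
move=> basic; apply/setP => -[[|[|//]] lt_j2]; rewrite !inE.
- rewrite (_ : Ordinal lt_j2 = ord0) ?tq_agents0 ?basic ?subsetUl //.
  exact: val_inj.
- rewrite (_ : Ordinal lt_j2 = ord_max) ?tq_agents1 ?basic ?subsetUr //.
  exact: val_inj.
Qed.

Definition tq_agents_seq (i : nat) : {set 'I_2} := tq_agents (peel C i.-1).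

Lemma tq_rem_agents k : tq_rem R1 R2 tq_agents_seq k = peel C k.
Proof. by elim: k => //= k ->; rewrite /tq_agents_seq /= tq_step_agents. Qed.

Lemma tq_cell_agents i : tq_cell R1 R2 tq_agents_seq i.+1 = minr C (peel C i).
Proof. by rewrite /tq_cell tq_rem_agents tq_step_agents. Qed.

Lemma tq_result_agents : tq_result R1 R2 tq_agents_seq C.
Proof.
have rem_eq0 : exists k, tq_rem R1 R2 tq_agents_seq k == set0.
  by exists #|W|; rewrite tq_rem_agents peel_card_eq0.
case: (ex_minnP rem_eq0) => m /eqP rem_m min_m.
apply: (tq_result_intro rem_m) => [m' lt_m'm|x y [|i] [|j] //= _ _].
  by apply: contraTN lt_m'm => /min_m; rewrite -leqNgt.
by rewrite !tq_cell_agents ltnS; apply: minr_peel_le.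
Qed.

End PostulatesToTeamQueue.

Theorem proposition5 (W : finType) (w0 : W)
  (D : rel W -> rel W -> Prop) (comb : rel W -> rel W -> rel W)
  (HD : forall R1 R2, D R1 R2 -> inV R1 R2)
  (Hcomb : combinator D comb) :
  TeamQueue D comb <->
  (basic D comb /\ SPUplus D comb /\ WPUplus D comb).
Proof.
split=> [TQ|[basicD [SPU WPU]] R1 R2 D12].
  split; [|split] => R1 R2 D12; have [tR1 [tR2 _]] := HD _ _ D12;
    have [a [a1 [_ [m [upto_m [_ Cdef]]]]]] := TQ _ _ D12.
  - exact: tq_result_basic tR1 upto_m Cdef a1.
  - exact: tq_result_SPU upto_m Cdef.
  - exact: tq_result_WPU tR1 tR2 upto_m Cdef.
have [tR1 [tR2 [S sv]]] := HD _ _ D12; have tC := Hcomb _ _ D12 tR1 tR2.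
have SPU12 := SPU _ _ D12; have WPU12 := WPU _ _ D12.
exists (tq_agents_seq R1 R2 (comb R1 R2)); split; [|split].
- exact: tq_agents_setT (basicD _ _ D12).
- move=> i _; exact: tq_agents_neq0 tC WPU12 _.
- exact: tq_result_agents tR1 tR2 tC sv SPU12 WPU12.
Qed.
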